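(* Let $n\in\mathbb N$ with $n\ge 10$ and let $T_n$ be a tree on $n$ vertices with $\Delta(T_n)=n-4$. Suppose that for every integer $m\ge n$ and every connected graph $H\in\mathrm{Ex}(m;T_n)$ we have $\Delta(H)\le n-4$. Let $p=k(n-1)+r\ge n-1$ with $k\in\mathbb N$ and $r\in\{0,1,\ldots,n-2\}$. Then $$\frac{(n-2)p-r(n-1-r)}2\le\mathrm{ex}(p;T_n)\le\frac{(n-2)p}2-\min\Big\{n-1+r,\ \frac{r(n-1-r)}2\Big\}.$$ Consequently, for $r\in\{0,1,2,n-5,n-4,n-3,n-2\}$ we have $\mathrm{ex}(p;T_n)=\frac{(n-2)p-r(n-1-r)}2$.
   Context: All graphs are finite simple graphs; $\Delta(G)$ is the maximum degree of $G$. For a graph $L$, $\mathrm{ex}(p;L)$ is the maximum number of edges in a graph on $p$ vertices containing no subgraph isomorphic to $L$, and $\mathrm{Ex}(p;L)$ is the set of graphs on $p$ vertices containing no copy of $L$ and having exactly $\mathrm{ex}(p;L)$ edges. *)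

(* A finite simple graph on a finite vertex type V is
   represented by its edge set E : {set {set V}}, every edge being a
   2-element subset of V. *)
From HB Require Import structures.
From mathcomp Require Import all_boot all_order all_algebra.
Set Implicit Arguments. Unset Strict Implicit. Unset Printing Implicit Defensive.
Import Order.TTheory GRing.Theory Num.Theory.

Section Graphs.
Variable V : finType.

Definition is_graph (E : {set {set V}}) : bool := [forall e in E, #|e| == 2].

Definition adj (E : {set {set V}}) : rel V := fun x y => (x != y) && ([set x; y] \in E).

Definition deg (E : {set {set V}}) (x : V) : nat := #|[set y | adj E x y]|.

Definition maxdeg (E : {set {set V}}) : nat := \max_(x : V) deg E x.

Definition connected (E : {set {set V}}) : bool :=
  [forall x, forall y, connect (adj E) x y].

Definition acyclic (E : {set {set V}}) : Prop :=
  forall s : seq V, 2 < size s -> uniq s -> ~~ cycle (adj E) s.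

Definition is_tree (E : {set {set V}}) : Prop := connected E /\ acyclic E.
End Graphs.

Definition contains (U W : finType) (L : {set {set U}}) (G : {set {set W}}) : bool :=
  [exists f : {ffun U -> W},
     injectiveb f && [forall x, forall y, adj L x y ==> adj G (f x) (f y)]].

Definition ex (U : finType) (p : nat) (L : {set {set U}}) : nat :=
  \max_(E : {set {set 'I_p}} | is_graph E && ~~ contains L E) #|E|.

Definition in_Ex (U : finType) (p : nat) (L : {set {set U}}) (E : {set {set 'I_p}}) : bool :=
  [&& is_graph E, ~~ contains L E & #|E| == ex p L].

From HB Require Import structures.
From mathcomp Require Import all_boot all_order all_algebra.
From mathcomp Require Import zify.
Import Order.TTheory GRing.Theory Num.Theory.
Set Implicit Arguments. Unset Strict Implicit. Unset Printing Implicit Defensive.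

(* Lower bound: k disjoint copies of K_(n-1) and one K_r contain no copy of the
   connected n-vertex tree T, since any copy would lie inside a single clique.
   Upper bound: let E be extremal.  A component of E with at least n vertices is
   itself connected and extremal, so its degrees are at most n - 4; in a
   component with a <= n - 1 vertices they are at most a - 1.  Charging every
   vertex its shortfall from degree n - 2 gives 2|E| + (total shortfall) <=
   (n - 2) p.  Small components of size a cost a (n - 1 - a) in total, a
   quantity superadditive modulo n - 1, and large components cost 2 per vertex;
   as p = r mod (n - 1), the total shortfall is at least
   min (2 (n - 1 + r), r (n - 1 - r)).  For the listed r this minimum is
   r (n - 1 - r) and the two bounds coincide. *)

Lemma card_set_sum (U : finType) (P : pred U) : #|[set u | P u]| = \sum_u P u.
Proof.
rewrite -sum1dep_card big_mkcond; apply: eq_bigr => u _; by case: (P u).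
Qed.

Section Graphs.
Variable V : finType.
Implicit Types (E : {set {set V}}) (x y : V).

Lemma adjC E : symmetric (adj E).
Proof. by move=> x y; rewrite /adj eq_sym setUC. Qed.

Lemma connect_adj_sym E : connect_sym (adj E).
Proof. exact/sym_connect_sym/adjC. Qed.

Definition component E x : {set V} := [set y | connect (adj E) x y].

Lemma mem_component E x : x \in component E x.
Proof. by rewrite inE connect0. Qed.

Lemma component_closed E x : closed (adj E) (component E x).
Proof. by move=> u v uv; rewrite !inE (same_connect_r (connect_adj_sym E) (connect1 uv)). Qed.

Lemma component_eq E x y : y \in component E x -> component E y = component E x.
Proof.
by rewrite inE => cxy; apply/setP => z; rewrite !inE (same_connect (connect_adj_sym E) cxy).
Qed.

Lemma deg_lt_card_component E x : deg E x < #|component E x|.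
Proof.
rewrite /deg [#|component E x|](cardsD1 x) mem_component ltnS; apply: subset_leq_card.
apply/subsetP => y; rewrite !inE => xy; case/andP: (xy) => x_neq_y _.
by rewrite eq_sym x_neq_y connect1.
Qed.

Lemma deg_incidence E x : is_graph E -> deg E x = \sum_(e in E) (x \in e).
Proof.
move=> /forall_inP gE.
rewrite big_mkcond (eq_bigr (fun e => ((e \in E) && (x \in e) : nat))); last first.
  by move=> e _; case: (e \in E).
rewrite -card_set_sum /deg -(card_imset _ (f := fun y => [set x; y])).
  apply: eq_card => e; rewrite inE; apply/imsetP/idP => [[y]|].
    by rewrite inE => /andP[_ eE] ->; rewrite eE set21.
  case eE: (e \in E) => //= xe.
  have /cards2P[a [b [ab eab]]] := gE e eE.
  move: xe; rewrite eab !inE => /orP[]/eqP xE; subst x.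
    by exists b; rewrite // inE /adj ab -eab eE.
  by exists a; rewrite 1?setUC // inE /adj eq_sym ab setUC -eab eE.
move=> y y' e.
have: y' \in [set x; y] by rewrite e set22.
have: y \in [set x; y'] by rewrite -e set22.
by rewrite !inE => /orP[/eqP->|/eqP//] /orP[]/eqP.
Qed.

Lemma handshake E : is_graph E -> \sum_x deg E x = 2 * #|E|.
Proof.
move=> gE; under eq_bigr => x _ do rewrite deg_incidence //.
rewrite exchange_big /= -sum1_card big_distrr /=; apply: eq_bigr => e eE.
rewrite muln1; move/forall_inP: gE => /(_ e eE) /eqP <-.
by rewrite -sum1_card [RHS]big_mkcond.
Qed.

Lemma connected_closed_const E (A : {pred V}) :
  connected E -> closed (adj E) A -> forall x y, (x \in A) = (y \in A).
Proof.
move=> /forallP cE clA x y; apply: (closed_connect clA).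
exact: (forallP (cE x)).
Qed.
End Graphs.

Lemma containsP (U W : finType) (L : {set {set U}}) (G : {set {set W}}) :
  reflect (exists2 f : U -> W, injective f & forall a b, adj L a b -> adj G (f a) (f b))
          (contains L G).
Proof.
apply: (iffP existsP) => [[f /andP[/injectiveP f_inj /forallP f_adj]]|[f f_inj f_adj]].
  exists f => // a b; exact/implyP/(forallP (f_adj a)).
exists [ffun a => f a]; apply/andP; split.
  by apply/injectiveP => a b; rewrite !ffunE => /f_inj.
by apply/forallP => a; apply/forallP => b; apply/implyP; rewrite !ffunE; apply: f_adj.
Qed.

Lemma contains_hom (U W X : finType) (L : {set {set U}}) (G : {set {set W}})
    (G' : {set {set X}}) (h : W -> X) :
  injective h -> (forall a b, adj G a b -> adj G' (h a) (h b)) ->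
  contains L G -> contains L G'.
Proof.
move=> h_inj h_adj /containsP[f f_inj f_adj]; apply/containsP.
by exists (h \o f) => [|a b /f_adj /h_adj]; first exact: inj_comp.
Qed.

Lemma leq_ex (U : finType) (p : nat) (L : {set {set U}}) (E : {set {set 'I_p}}) :
  is_graph E -> ~~ contains L E -> #|E| <= ex p L.
Proof. by move=> gE fE; apply: leq_bigmax_cond; rewrite gE fE. Qed.

Lemma ex_le (U : finType) (p m : nat) (L : {set {set U}}) :
  (forall E : {set {set 'I_p}}, is_graph E -> ~~ contains L E -> #|E| <= m) -> ex p L <= m.
Proof. by move=> bound; apply/bigmax_leqP => E /andP[]; apply: bound. Qed.

Lemma disjoint_set2 (T : finType) (u v : T) (A : {set T}) :
  [disjoint [set u; v] & A] = (u \notin A) && (v \notin A).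
Proof. by rewrite -setI_eq0 setIUl setU_eq0 !setI_eq0 !disjoints1. Qed.

Lemma exists_in_Ex (U : finType) (p : nat) (L : {set {set U}}) (E0 : {set {set 'I_p}}) :
  is_graph E0 -> ~~ contains L E0 -> exists E : {set {set 'I_p}}, in_Ex L E.
Proof.
move=> gE0 fE0; pose P (E : {set {set 'I_p}}) := is_graph E && ~~ contains L E.
have [|E /andP[gE fE] maxE] := @arg_maxnP _ E0 P (fun E => #|E|); first by rewrite /P gE0.
exists E; rewrite /in_Ex gE fE eqn_leq leq_ex //=.
by apply: ex_le => E' gE' fE'; apply: maxE; rewrite /P gE' fE'.
Qed.

(* A graph on the vertex set C is represented on 'I_#|C| (the vertex type of
   [ex] and [in_Ex]) through enum_val; [graft G F] replaces the part of G
   inside C by F. *)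
Section Graft.
Variables (V : finType) (C : {set V}) (x0 : V).
Hypothesis x0C : x0 \in C.
Implicit Types (G : {set {set V}}) (F : {set {set 'I_#|C|}}).
Local Notation h := (enum_val : 'I_#|C| -> V).
Local Notation rk := (enum_rank_in x0C).

Definition induced G : {set {set 'I_#|C|}} := [set f : {set 'I_#|C|} | h @: f \in G].

Definition graft G F : {set {set V}} :=
  [set e in G | [disjoint e & C]] :|: [set h @: f | f : {set 'I_#|C|} in F].

Lemma imset2_enum_val (a b : 'I_#|C|) : h @: [set a; b] = [set h a; h b].
Proof. by rewrite imsetU1 imset_set1. Qed.

Lemma adj_induced G a b : adj (induced G) a b = adj G (h a) (h b).
Proof. by rewrite /adj inE imset2_enum_val (inj_eq enum_val_inj). Qed.

Lemma is_graph_induced G : is_graph G -> is_graph (induced G).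
Proof.
move=> /forall_inP gG; apply/forall_inP => f; rewrite inE => /gG.
by rewrite card_imset //; exact: enum_val_inj.
Qed.

Lemma contains_induced (U : finType) (L : {set {set U}}) G :
  contains L (induced G) -> contains L G.
Proof. by apply: contains_hom enum_val_inj _ => a b; rewrite adj_induced. Qed.

Lemma deg_induced G a : closed (adj G) C -> deg (induced G) a = deg G (h a).
Proof.
move=> clG; rewrite /deg -(card_imset _ enum_val_inj); apply: eq_card => y; rewrite !inE.
apply/imsetP/idP => [[b]|ay]; first by rewrite inE adj_induced => ? ->.
have yC : y \in C by rewrite -(clG _ _ ay) enum_valP.
by exists (rk y); rewrite ?inE ?adj_induced enum_rankK_in.
Qed.

Lemma connected_induced G :
  closed (adj G) C -> {in C &, forall u v, connect (adj G) u v} -> connected (induced G).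
Proof.
move=> clG connC; apply/forallP => a; apply/forallP => b.
pose r u := if u \in C then rk u else rk x0.
have step u v : adj G u v -> connect (adj (induced G)) (r u) (r v).
  move=> uv; rewrite /r -(clG _ _ uv); case: ifP => uC; last exact: connect0.
  have vC : v \in C by rewrite -(clG _ _ uv).
  by apply: connect1; rewrite adj_induced !enum_rankK_in.
have rK i : r (h i) = i by rewrite /r enum_valP enum_valK_in.
rewrite -(rK a) -(rK b).
have /connectP[s path_s ->] := connC _ _ (enum_valP a) (enum_valP b).
elim: s (h a) path_s => [|v s IHs] u /=; first by rewrite connect0.
by case/andP=> /step uv /IHs; apply: connect_trans.
Qed.

Lemma adj_graft_enum G F a b : adj (graft G F) (h a) (h b) = adj F a b.
Proof.
rewrite /adj (inj_eq enum_val_inj) !inE disjoint_set2 enum_valP andbF /=.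
by rewrite -imset2_enum_val (mem_imset _ _ (imset_inj enum_val_inj)).
Qed.

Lemma adj_graft_out G F u v :
  closed (adj G) C -> u \notin C -> adj (graft G F) u v = adj G u v.
Proof.
move=> clG uC; rewrite /adj; case: (u =P v) => //= /eqP u_neq_v.
rewrite !inE disjoint_set2 uC orb_idr; last first.
  case/imsetP => f _ uv_f; move: uC; have: u \in h @: f by rewrite -uv_f set21.
  by case/imsetP => i _ ->; rewrite enum_valP.
by apply: andb_idr => uvG; rewrite -(clG u v) // /adj u_neq_v.
Qed.

Lemma graft_closed G F : closed (adj G) C -> closed (adj (graft G F)) C.
Proof.
move=> clG.
have out u v : u \notin C -> adj (graft G F) u v -> (u \in C) = (v \in C).
  by move=> uC; rewrite adj_graft_out // => /clG.
move=> u v uv; apply/idP/idP => [uC|vC].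
  by apply: contraTT uC => vC; rewrite -(out v u vC) // adjC.
by apply: contraTT vC => uC; rewrite -(out u v uC uv).
Qed.

Lemma enum_val_onto y : y \in C -> y = h (rk y).
Proof. by move=> yC; rewrite enum_rankK_in. Qed.

Lemma graft_induced G : is_graph G -> closed (adj G) C -> graft G (induced G) = G.
Proof.
move=> /forall_inP gG clG; apply/setP => e; rewrite !inE.
apply/idP/idP => [/orP[/andP[] //|/imsetP[f]]|eG]; first by rewrite inE => ? ->.
have /cards2P[u [v [u_neq_v euv]]] := gG e eG.
have uvG : adj G u v by rewrite /adj u_neq_v -euv.
rewrite eG euv disjoint_set2 -(clG _ _ uvG) andbb /=.
case: (boolP (u \in C)) => //= uC; have vC : v \in C by rewrite -(clG _ _ uvG).
apply/imsetP; exists [set rk u; rk v]; last by rewrite imset2_enum_val -!enum_val_onto.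
by rewrite inE imset2_enum_val -!enum_val_onto // -euv.
Qed.

Lemma card_graft G F :
  is_graph F -> #|graft G F| = #|[set e in G | [disjoint e & C]]| + #|F|.
Proof.
move=> /forall_inP gF; rewrite cardsU (card_imset _ (imset_inj enum_val_inj)).
suff -> : [set e in G | [disjoint e & C]] :&: [set h @: f | f : {set 'I_#|C|} in F] = set0.
  by rewrite cards0 subn0.
apply/setP => e; rewrite !inE; apply/negbTE/andP => -[/andP[_ eC] /imsetP[f fF ef]].
have /cards2P[a [b [_ fab]]] := gF f fF.
by move: eC; rewrite ef fab imset2_enum_val disjoint_set2 !enum_valP.
Qed.

Lemma is_graph_graft G F : is_graph G -> is_graph F -> is_graph (graft G F).
Proof.
move=> /forall_inP gG /forall_inP gF; apply/forall_inP => e.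
rewrite !inE => /orP[/andP[/gG] //|/imsetP[f fF ->]].
by rewrite (card_imset _ enum_val_inj) gF.
Qed.

Lemma contains_graft (U : finType) (L : {set {set U}}) G F :
  connected L -> closed (adj G) C -> contains L (graft G F) -> contains L F || contains L G.
Proof.
move=> cL clG /containsP[g g_inj g_adj].
have side : forall a b, (g a \in C) = (g b \in C).
  apply: (connected_closed_const (A := [pred a | g a \in C]) cL) => a b /g_adj.
  by rewrite !inE; apply: graft_closed.
case: (boolP [exists a, g a \in C]) => [/existsP[a0 ga0C]|/existsPn outC].
  have gC a : g a \in C by rewrite (side a a0).
  apply/orP; left; apply/containsP; exists (rk \o g) => [a b /= e|a b /g_adj].
    by apply: g_inj; rewrite (enum_val_onto (gC a)) (enum_val_onto (gC b)) e.
  by rewrite (enum_val_onto (gC a)) (enum_val_onto (gC b)) adj_graft_enum.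
apply/orP; right; apply/containsP; exists g => // a b /g_adj.
by rewrite adj_graft_out.
Qed.

Lemma induced_extremal (U : finType) (L : {set {set U}}) G :
  connected L -> is_graph G -> ~~ contains L G -> closed (adj G) C ->
  (forall G', is_graph G' -> ~~ contains L G' -> #|G'| <= #|G|) ->
  in_Ex L (induced G).
Proof.
move=> cL gG fG clG maxG.
have gH := is_graph_induced gG.
have fH : ~~ contains L (induced G) by apply: contra fG; apply: contains_induced.
rewrite /in_Ex gH fH eqn_leq leq_ex //=; apply: ex_le => F gF fF.
have fGF : ~~ contains L (graft G F).
  by apply/negP => /(contains_graft cL clG)/orP[]; apply/negP.
have := maxG _ (is_graph_graft gG gF) fGF.
by rewrite -{2}(graft_induced gG clG) !card_graft // leq_add2l.
Qed.
End Graft.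

Lemma leq_mul_sub_modD N t a : t < N -> 0 < a <= N ->
  ((t + a) %% N) * (N - (t + a) %% N) <= t * (N - t) + a * (N - a).
Proof.
move=> tN /andP[a_gt0 aN]; case: (ltnP (t + a) N) => taN; first by rewrite modn_small //; nia.
have -> : (t + a) %% N = t + a - N.
  by rewrite -{1}(subnKC taN) modnDl modn_small //; lia.
nia.
Qed.

(* With N = n - 1: the shortfall from degree N - 1 of a vertex whose component
   has m vertices, for m <= N, and a lower bound for it otherwise. *)
Definition defect N m := if m <= N then N - m else 2.

(* L is the number of vertices of S in components with more than N vertices. *)
Lemma sum_defect_components (V : finType) (E : {set {set V}}) N (S : {set V}) : 0 < N ->
  (forall x, x \in S -> component E x \subset S) ->
  exists L, [/\ (L == 0) || (N < L), L <= #|S| &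
    ((#|S| - L) %% N) * (N - (#|S| - L) %% N) + 2 * L
      <= \sum_(x in S) defect N #|component E x|].
Proof.
move=> N_gt0; have [K] := ubnP #|S|; elim: K S => // K IH S ltS clS.
have [->|[x xS]] := set_0Vmem S; first by exists 0; rewrite cards0 mod0n big_set0.
set Cx := component E x; have CxS := clS x xS.
have clS' y : y \in S :\: Cx -> component E y \subset S :\: Cx.
  rewrite in_setD => /andP[yCx yS]; apply/subsetP => z zy.
  rewrite in_setD (subsetP (clS y yS) z zy) andbT.
  by apply: contra yCx => zCx; rewrite /Cx -(component_eq zCx) (component_eq zy) mem_component.
have cardS : #|S| = #|S :\: Cx| + #|Cx| by rewrite -(cardsID Cx S) addnC (setIidPr CxS).
have Cx_gt0 : 0 < #|Cx| by apply/card_gt0P; exists x; exact: mem_component.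
have [|L [L0 LS' HL]] := IH (S :\: Cx) _ clS'; first by move: ltS; rewrite cardS; lia.
have -> : \sum_(y in S) defect N #|component E y| =
          \sum_(y in S :\: Cx) defect N #|component E y| + #|Cx| * defect N #|Cx|.
  rewrite (big_setID Cx) /= (setIidPr CxS) addnC -sum_nat_const; congr (_ + _).
  by apply: eq_bigr => y yCx; rewrite (component_eq yCx).
rewrite cardS; case: (leqP #|Cx| N) => CxN.
  rewrite {2}/defect CxN.
  exists L; split => //; first lia.
  have -> : #|S :\: Cx| + #|Cx| - L = (#|S :\: Cx| - L) + #|Cx| by lia.
  rewrite -modnDml.
  have Cx_mod := leq_mul_sub_modD (ltn_pmod (#|S :\: Cx| - L) N_gt0) (a := #|Cx|).
  rewrite Cx_gt0 CxN in Cx_mod.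
  by apply: leq_trans (leq_add (Cx_mod isT) (leqnn _)) _; rewrite addnAC leq_add2r.
exists (L + #|Cx|); split; [lia | lia |].
have -> : #|S :\: Cx| + #|Cx| - (L + #|Cx|) = #|S :\: Cx| - L by lia.
by rewrite {2}/defect (leqNgt #|Cx|) CxN mulnDr addnA (mulnC #|Cx|) leq_add2r.
Qed.

Lemma defect_bound N k r L X : r < N -> (L == 0) || (N < L) -> L <= k * N + r ->
  ((k * N + r - L) %% N) * (N - (k * N + r - L) %% N) + 2 * L <= X ->
  (2 * (N + r) <= X) \/ (r * (N - r) <= X).
Proof.
move=> rN /orP[/eqP->|NL] LkNr.
  by rewrite subn0 modnMDl modn_small // muln0 addn0; right.
case: (leqP (N + r) L) => NrL bound.
  by left; apply: leq_trans bound; apply: leq_trans (leq_addl _ _); rewrite leq_mul2l NrL.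
have k_gt0 : 0 < k by case: k LkNr {bound} => [|//]; lia.
have t_def : k * N + r - L = (k - 1) * N + (r - (L - N)) by rewrite mulnBl mul1n; nia.
move: bound; rewrite t_def modnMDl modn_small; last lia.
set t := r - (L - N) => bound; left.
have : 2 * t <= t * (N - t) by rewrite mulnC leq_mul2l; apply/orP; right; lia.
by move: bound; generalize (t * (N - t)) => s; lia.
Qed.

Lemma sum_defect_ge (V : finType) (E : {set {set V}}) N k r :
  r < N -> #|V| = k * N + r ->
  let X := \sum_x defect N #|component E x| in (2 * (N + r) <= X) \/ (r * (N - r) <= X).
Proof.
move=> rN cardV X.
have [|L [L0 LV]] := @sum_defect_components V E N setT (leq_ltn_trans (leq0n r) rN).
  by move=> x _; apply: subsetT.
rewrite cardsT cardV in LV *; rewrite (eq_bigl xpredT) => [bound|x]; last by rewrite inE.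
exact: (defect_bound rN L0 LV bound).
Qed.

Section UpperBound.
Variables (n p : nat) (T : {set {set 'I_n}}).
Hypothesis n_ge4 : 4 <= n.
Hypothesis T_connected : connected T.
Hypothesis Ex_maxdeg : forall (m : nat) (H : {set {set 'I_m}}),
  n <= m -> in_Ex T H -> connected H -> maxdeg H <= n - 4.
Variable E : {set {set 'I_p}}.
Hypothesis E_extremal : in_Ex T E.

Lemma deg_large_component x : n <= #|component E x| -> deg E x <= n - 4.
Proof.
case/and3P: E_extremal => gE fE /eqP exE large.
have xC := mem_component E x.
have clC : closed (adj E) (component E x) by apply: component_closed.
have connC : {in component E x &, forall u v, connect (adj E) u v}.
  move=> u v; rewrite !inE => xu; apply: connect_trans.
  by rewrite connect_adj_sym.
have maxE (G : {set {set 'I_p}}) : is_graph G -> ~~ contains T G -> #|G| <= #|E|.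
  by rewrite exE; apply: leq_ex.
have := Ex_maxdeg large (induced_extremal xC T_connected gE fE clC maxE).
move=> /(_ (connected_induced xC clC connC)); apply: leq_trans.
rewrite {1}(enum_val_onto xC xC) -(deg_induced xC) //.
exact: (leq_bigmax (F := deg (induced (component E x) E))).
Qed.

Lemma deg_add_defect_le x : deg E x + defect (n - 1) #|component E x| <= n - 2.
Proof.
rewrite /defect; case: (leqP #|component E x| (n - 1)) => large.
  by have := deg_lt_card_component E x; lia.
have : n <= #|component E x| by lia.
by move=> /deg_large_component; lia.
Qed.

Lemma twice_ex_add_defect_le :
  2 * ex p T + \sum_x defect (n - 1) #|component E x| <= (n - 2) * p.
Proof.
case/and3P: E_extremal => gE _ /eqP <-.
rewrite -(handshake gE) -big_split /=.
apply: (@leq_trans (\sum_(x < p) (n - 2))).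
  by apply: leq_sum => x _; apply: deg_add_defect_le.
by rewrite sum_nat_const card_ord mulnC.
Qed.
End UpperBound.

Lemma sum_ord_eq m (q : nat) : \sum_(i < m) ((i : nat) == q) = (q < m).
Proof.
elim: m => [|m IHm]; first by rewrite big_ord0.
by rewrite big_ord_recr /= IHm ltnS; case: ltngtP.
Qed.

Section CliquePartition.
Variables (d k r : nat).
Hypothesis d_gt0 : 0 < d.
Hypothesis r_lt_d : r < d.

Lemma div_block q j : q * d <= j < q * d + d -> j %/ d = q.
Proof.
move=> /andP[lo hi]; rewrite -(subnKC lo) divnMDl // divn_small ?addn0 //; lia.
Qed.

Lemma sum_div_blocks (F : nat -> nat) :
  \sum_(i < k * d + r) F (i %/ d) = \sum_(q < k) d * F q + r * F k.
Proof.
rewrite -(big_mkord xpredT (fun i => F (i %/ d))) (@big_cat_nat _ _ _ (k * d)) /= ?leq_addr //.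
congr (_ + _).
  rewrite big_nat_mul big_mkord; apply: eq_bigr => q _.
  rewrite mulSnr -[in RHS](addKn (q * d) d) -sum_nat_const_nat.
  by apply: eq_big_nat => j /div_block ->.
rewrite -[in RHS](addKn (k * d) r) -sum_nat_const_nat; apply: eq_big_nat => j lim.
by rewrite (div_block (q := k)) //; move: lim; lia.
Qed.

Definition clique_partition (m : nat) : {set {set 'I_m}} :=
  [set e : {set 'I_m} | (#|e| == 2) && [forall x in e, forall y in e, x %/ d == y %/ d]].

Lemma adj_clique_partition m (x y : 'I_m) :
  adj (clique_partition m) x y = (x != y) && (x %/ d == y %/ d).
Proof.
rewrite /adj inE cards2; case: (x =P y) => //= _.
apply/forall_inP/idP => [/(_ x (set21 x y))/forall_inP/(_ y (set22 x y)) //|xy u].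
by rewrite !inE => /orP[]/eqP-> ; apply/forall_inP => v; rewrite !inE => /orP[]/eqP->;
   rewrite // eq_sym.
Qed.

Lemma is_graph_clique_partition m : is_graph (clique_partition m).
Proof. by apply/forall_inP => e; rewrite inE => /andP[]. Qed.

Lemma card_block q :
  #|[set u : 'I_(k * d + r) | u %/ d == q]| = d * (q < k) + r * (k == q).
Proof.
rewrite card_set_sum (sum_div_blocks (fun j => (j == q : nat)) : _ = _) -big_distrr /=.
by rewrite sum_ord_eq eq_sym.
Qed.

Lemma clique_partition_free (U : finType) (L : {set {set U}}) :
  connected L -> d < #|U| -> ~~ contains L (clique_partition (k * d + r)).
Proof.
move=> cL bigU; apply/negP => /containsP[g g_inj g_adj].
have /card_gt0P[a0 _] : 0 < #|U| by apply: leq_ltn_trans bigU.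
have same_block a : g a %/ d == g a0 %/ d.
  suff -> : (g a %/ d == g a0 %/ d) = (g a0 %/ d == g a0 %/ d) by [].
  apply: (connected_closed_const (A := [pred a | g a %/ d == g a0 %/ d]) cL) => b c.
  by move/g_adj; rewrite adj_clique_partition !inE => /andP[_ /eqP ->].
have : #|U| <= #|[set u : 'I_(k * d + r) | u %/ d == g a0 %/ d]|.
  rewrite -(card_imset _ g_inj); apply/subset_leq_card/subsetP => _ /imsetP[a _ ->].
  by rewrite inE same_block.
by rewrite card_block; case: ltngtP => _; rewrite ?muln0 ?muln1 ?addn0 ?add0n; lia.
Qed.

Lemma deg_clique_partition (x : 'I_(k * d + r)) :
  deg (clique_partition (k * d + r)) x = d * (x %/ d < k) + r * (k == x %/ d) - 1.
Proof.
rewrite -card_block (cardsD1 x) inE eqxx add1n subn1 /deg; apply: eq_card => y.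
by rewrite !inE adj_clique_partition eq_sym [y %/ d == _]eq_sym.
Qed.

Lemma twice_card_clique_partition :
  2 * #|clique_partition (k * d + r)| = k * (d * (d - 1)) + r * (r - 1).
Proof.
rewrite -handshake ?is_graph_clique_partition //.
under eq_bigr => x _ do rewrite deg_clique_partition.
rewrite (sum_div_blocks (fun q => d * (q < k) + r * (k == q) - 1) : _ = _) /=.
rewrite ltnn eqxx muln0 muln1 add0n; congr (_ + _).
rewrite -[X in X * _](card_ord k) -sum_nat_const; apply: eq_bigr => q _.
by rewrite ltn_ord (gtn_eqF (ltn_ord q)) muln1 muln0 addn0.
Qed.
End CliquePartition.

Lemma small_r_defect n r : r \in [:: 0; 1; 2; n - 5; n - 4; n - 3; n - 2] ->
  r * (n - 1 - r) <= 2 * (n - 1 + r).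
Proof. by rewrite !inE => /or4P[|||/or4P[|||]] /eqP->; lia. Qed.

Local Open Scope ring_scope.

Lemma ex_bounds_int (n k r e X : nat) : (2 <= n)%N -> (r <= n - 2)%N ->
  (k * ((n - 1) * (n - 2)) + r * (r - 1) <= 2 * e)%N ->
  (2 * e + X <= (n - 2) * (k * (n - 1) + r))%N ->
  (2 * (n - 1 + r) <= X)%N \/ (r * (n - 1 - r) <= X)%N ->
  let p := (k * (n - 1) + r)%N in
  let lhs : int := (n%:Z - 2) * p%:Z - r%:Z * (n%:Z - 1 - r%:Z) in
  [/\ lhs <= 2 * e%:Z,
      2 * e%:Z <= (n%:Z - 2) * p%:Z
                  - Num.min (2 * (n%:Z - 1 + r%:Z)) (r%:Z * (n%:Z - 1 - r%:Z))
    & r \in [:: 0; 1; 2; n - 5; n - 4; n - 3; n - 2]%N -> 2 * e%:Z = lhs].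
Proof.
move=> n_ge2 r_le lo up defect_ge p lhs.
have [s n_eq] : exists s, n = (r + s + 2)%N by exists (n - 2 - r)%N; lia.
have small := @small_r_defect n r; rewrite {}/lhs {}/p {}n_eq in lo up defect_ge small *.
have n_sub1 : (r + s + 2 - 1 = r + s + 1)%N by lia.
have n_sub2 : (r + s + 2 - 2 = r + s)%N by lia.
have n_sub1_r : (r + s + 1 - r = s + 1)%N by lia.
rewrite ?n_sub1 ?n_sub2 ?n_sub1_r in lo up defect_ge small *; rewrite !PoszD !PoszM.
have r_sub1 : (r * (r - 1) = r * r - r)%N by rewrite mulnBr muln1.
rewrite r_sub1 in lo; split.
- by lia.
- have : Num.min (2 * ((r + s + 2)%:Z - 1 + r%:Z)) (r%:Z * ((r + s + 2)%:Z - 1 - r%:Z)) <= X%:Z.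
    by rewrite ge_min; case: defect_ge => ?; apply/orP; [left|right]; lia.
  by rewrite !PoszD; move: (Num.min _ _) => M; lia.
- move=> /small r_small.
  have X_ge : (r * (s + 1) <= X)%N by case: defect_ge; lia.
  by lia.
Qed.

Unset Implicit Arguments. Set Strict Implicit.

Theorem lemma2p8 (n : nat) (T : {set {set 'I_n}}) :
  (10 <= n)%N ->
  is_graph T -> is_tree T -> maxdeg T = (n - 4)%N ->
  (forall (m : nat) (H : {set {set 'I_m}}),
      (n <= m)%N -> @in_Ex _ m T H -> connected H -> (maxdeg H <= n - 4)%N) ->
  forall p k r : nat,
    (r <= n - 2)%N -> p = (k * (n - 1) + r)%N -> (n - 1 <= p)%N ->
    let lhs : int := (n%:Z - 2) * p%:Z - r%:Z * (n%:Z - 1 - r%:Z) in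
    [/\ lhs <= 2 * (@ex _ p T)%:Z,
        2 * (@ex _ p T)%:Z <= (n%:Z - 2) * p%:Z
                           - Num.min (2 * (n%:Z - 1 + r%:Z)) (r%:Z * (n%:Z - 1 - r%:Z))
      & r \in [:: 0; 1; 2; n - 5; n - 4; n - 3; n - 2]%N -> 2 * (@ex _ p T)%:Z = lhs].
Proof.
move=> n_ge10 _ [T_connected _] _ Ex_maxdeg p k r r_le -> _.
have d_gt0 : (0 < n - 1)%N by lia.
have r_lt_d : (r < n - 1)%N by lia.
have n_ge4 : (4 <= n)%N by lia.
have B_free : ~~ contains T (clique_partition (n - 1) (k * (n - 1) + r)).
  by apply: clique_partition_free => //; rewrite card_ord; lia.
have lower := leq_ex (is_graph_clique_partition _ _) B_free.
rewrite -(leq_pmul2l (isT : (0 < 2)%N)) twice_card_clique_partition // in lower.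
have [E E_ex] := exists_in_Ex (is_graph_clique_partition _ _) B_free.
apply: (ex_bounds_int (X := \sum_x defect (n - 1) #|component E x|)) => //; first by lia.
- by rewrite -subnDA in lower.
- by have := twice_ex_add_defect_le n_ge4 T_connected Ex_maxdeg E_ex.
- by have := sum_defect_ge E r_lt_d (card_ord _).
Qed.
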